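(* Let $k$ be a field of characteristic zero, $G$ a group, $X$ a right $G$-set and $A\neq0$ a strongly $G$-graded $k$-algebra. The following are equivalent: (1) the functor $kX\otimes-:\mathcal M_A\to\mathrm{gr}\text{-}(G,X,A)$ is separable; (2) $X$ contains a nonempty finite $G$-subset; (3) there exists $x\in X$ whose $G$-orbit is finite.
   Context: $A=\bigoplus_{g\in G}A_g$ with $A_gA_h=A_{gh}$ for all $g,h$ (strongly graded), $1\in A_1$. $\mathrm{gr}\text{-}(G,X,A)$ is the category of right $A$-modules $M=\bigoplus_{x\in X}M_x$ with $M_xA_g\subseteq M_{x\cdot g}$, morphisms graded $A$-linear maps. The functor $kX\otimes-$ sends $N$ to $kX\otimes N$ with $(kX\otimes N)_x=x\otimes N$ and $(x\otimes n)a_g=x\cdot g\otimes na_g$ for $a_g\in A_g$. A $G$-subset of $X$ is a subset closed under the action of $G$. A functor is separable if $\mathrm{Hom}(M,N)\to\mathrm{Hom}(FM,FN)$ has a left inverse natural in $M,N$. *)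

From HB Require Import structures.
From mathcomp Require Import all_boot all_algebra.
From mathcomp Require Import monoid.
From Stdlib Require Import List.
Set Implicit Arguments. Unset Strict Implicit. Unset Printing Implicit Defensive.
Import GRing.Theory.
Local Open Scope ring_scope.

(* Conventions:
   - groups: MathComp [groupType] (boot/monoid.v), product [*%g], unit [1%g];
   - right G-sets: a type [X] with [act : X -> G -> X];
   - a G-grading of a k-algebra A: a family of predicates [Ag : G -> A -> Prop];
   - right A-modules: [lmodType A^c] (left modules over the opposite ring). *)

Section Defs.
Variable G : groupType.

Definition is_right_action (X : Type) (act : X -> G -> X) : Prop :=
  (forall x, act x 1%g = x) /\ (forall x g h, act (act x g) h = act x (g * h)%g).

Definition G_subset (X : Type) (act : X -> G -> X) (Y : X -> Prop) : Prop :=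
  forall y g, Y y -> Y (act y g).
Definition finite_set (X : Type) (Y : X -> Prop) : Prop :=
  exists s : list X, forall y, Y y -> In y s.
Definition G_orbit (X : Type) (act : X -> G -> X) (x : X) : X -> Prop :=
  fun y => exists g, y = act x g.

Variable k : fieldType.
Variable A : algType k.

(* A = \bigoplus_{g in G} A_g as k-vector spaces *)
Definition is_G_grading (Ag : G -> A -> Prop) : Prop :=
  [/\ (forall g, Ag g 0),
      (forall g a b, Ag g a -> Ag g b -> Ag g (a + b)),
      (forall g (c : k) a, Ag g a -> Ag g (c *: a)),
      (forall a : A, exists (s : list G) (f : G -> A),
          NoDup s /\ (forall g, In g s -> Ag g (f g)) /\ a = \sum_(g <- s) f g) &
      (forall (s : list G) (f : G -> A),
          NoDup s -> (forall g, In g s -> Ag g (f g)) -> \sum_(g <- s) f g = 0 ->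
          forall g, In g s -> f g = 0)].

(* strongly graded: A_g A_h = A_{gh} (product of subspaces = span of products), 1 in A_1 *)
Definition strongly_graded (Ag : G -> A -> Prop) : Prop :=
  [/\ is_G_grading Ag,
      (forall g h a b, Ag g a -> Ag h b -> Ag (g * h)%g (a * b)),
      (forall g h c, Ag (g * h)%g c -> exists s : list (A * A),
          (forall p, In p s -> Ag g p.1 /\ Ag h p.2) /\ c = \sum_(p <- s) p.1 * p.2) &
      Ag 1%g 1].

Variable X : Type.
Variable act : X -> G -> X.

(* the underlying module of kX (x) N = \bigoplus_{x in X} x (x) N,
   realised as finitely supported functions X -> N (u x = component in x (x) N) *)
Definition fsupp (N : zmodType) (u : X -> N) : Prop :=
  exists s : list X, forall x, ~ In x s -> u x = 0.

Record kXt (N : zmodType) := KXt { kXval :> X -> N ; kXvalP : fsupp kXval }.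

Lemma fsupp_add (N : zmodType) (u v : kXt N) : fsupp (fun x => u x + v x).
Proof.
case: u => u [s Hs]; case: v => v [t Ht]; exists (s ++ t) => x Hx /=.
rewrite Hs ?Ht ?addr0 // => H; apply: Hx; apply: in_or_app; tauto.
Qed.
Definition kXadd (N : zmodType) (u v : kXt N) : kXt N := KXt (fsupp_add u v).

Hypothesis actP : is_right_action act.

Lemma fsupp_hact (N : lmodType A^c) (u : kXt N) (g : G) (a : A) :
  fsupp (fun y => (a : A^c) *: u (act y g^-1%g)).
Proof.
case: u => u [s Hs]; exists (map (fun x => act x g) s) => y Hy /=.
rewrite Hs ?scaler0 // => H; apply: Hy.
have -> : y = act (act y g^-1%g) g by case: actP => a1 a2; rewrite a2 mulVg a1.
exact: in_map.
Qed.

(* (x (x) n) a_g = x.g (x) n a_g,  i.e. (u a_g)(y) = u(y.g^-1) a_g *)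
Definition kXhact (N : lmodType A^c) (u : kXt N) (g : G) (a : A) : kXt N :=
  KXt (fsupp_hact u g a).

Lemma fsupp_map (M N : lmodType A^c) (f : {linear M -> N}) (u : kXt M) :
  fsupp (fun x => f (u x)).
Proof. case: u => u [s Hs]; exists s => x Hx /=; by rewrite Hs ?linear0. Qed.
Definition kXmap (M N : lmodType A^c) (f : {linear M -> N}) (u : kXt M) : kXt N :=
  KXt (fsupp_map f u).

Variable Ag : G -> A -> Prop.

(* morphisms kX (x) M -> kX (x) N in gr-(G,X,A): additive, compatible with the
   action of homogeneous elements (hence A-linear), preserving the X-grading *)
Definition is_gr_hom (M N : lmodType A^c) (phi : kXt M -> kXt N) : Prop :=
  [/\ (forall u v y, phi (kXadd u v) y = phi u y + phi v y),
      (forall g a, Ag g a -> forall u y, phi (kXhact u g a) y = kXhact (phi u) g a y) &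
      (forall (x : X) (u : kXt M), (forall y, y <> x -> u y = 0) -> forall y, y <> x -> phi u y = 0)].

Definition gr_hom (M N : lmodType A^c) := {phi : kXt M -> kXt N | is_gr_hom phi}.

Definition kX_separable : Prop :=
  exists P : forall M N : lmodType A^c, gr_hom M N -> {linear M -> N},
    (forall (M N : lmodType A^c) (f : {linear M -> N}) (phi : gr_hom M N),
        (forall u, proj1_sig phi u = kXmap f u) -> forall m, P M N phi m = f m)
 /\ (forall (M M' N N' : lmodType A^c) (f : {linear M' -> M}) (g : {linear N -> N'})
        (phi : gr_hom M N) (psi : gr_hom M' N'),
        (forall u, proj1_sig psi u = kXmap g (proj1_sig phi (kXmap f u))) ->
        forall m, P M' N' psi m = g (P M N phi (f m))).

End Defs.

From HB Require Import structures.
From mathcomp Require Import all_boot all_algebra.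
From mathcomp Require Import monoid.
From Stdlib Require Import List.
From mathcomp Require Import boolp.
From Stdlib Require Import Permutation.
Local Open Scope ring_scope.
Import GRing.Theory.
Set Implicit Arguments. Unset Strict Implicit. Unset Printing Implicit Defensive.

(* If the orbit O of some x is finite, averaging over it,
   P(phi)(m) = |O|^-1 sum_(y in O) phi(y (x) m)_y, is a natural retraction of
   kX (x) -; it is A-linear because a homogeneous a_g acts on kX (x) M by
   permuting O, and A is spanned by homogeneous elements.
   Conversely, splitting elements of A into homogeneous components gives a
   morphism sigma : kX (x) A -> kX (x) A^(X), x (x) a_g |-> x (x) (x.g^-1 (x) a_g),
   lifting the summation map eps : A^(X) -> A.  Naturality of a retraction P
   forces v := P(sigma)(1) to satisfy eps v = 1 and c v_(z.h) = v_z c for all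
   c in A_h; as 1 lies in A_h A_(h^-1), the support of v is then a nonempty
   finite G-subset of X. *)

Definition classic_eq_dec (T : Type) (x y : T) : {x = y} + {x <> y} := pselect (x = y).

Section ListUnion.
Variable T : Type.

Definition list_union (l1 l2 : list T) : list T := nodup (@classic_eq_dec T) (l1 ++ l2).

Lemma list_union_NoDup l1 l2 : NoDup (list_union l1 l2).
Proof. exact: NoDup_nodup. Qed.

Lemma list_unionl l1 l2 x : In x l1 -> In x (list_union l1 l2).
Proof. by move=> Hx; rewrite nodup_In; apply: in_or_app; left. Qed.

Lemma list_unionr l1 l2 x : In x l2 -> In x (list_union l1 l2).
Proof. by move=> Hx; rewrite nodup_In; apply: in_or_app; right. Qed.

End ListUnion.

Section ListSums.
Variables (T : Type) (N : zmodType).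
Implicit Types (F : T -> N) (l : list T).

Lemma big_Permutation F l l' :
  Permutation l l' -> \sum_(x <- l) F x = \sum_(x <- l') F x.
Proof.
elim=> [|x l1 l2 _ IH|x y l1|l1 l2 l3 _ IH1 _ IH2] //.
- by rewrite !big_cons IH.
- by rewrite !big_cons addrCA.
- by rewrite IH1 IH2.
Qed.

Lemma eq_big_In F F' l : (forall x, In x l -> F x = F' x) ->
  \sum_(x <- l) F x = \sum_(x <- l) F' x.
Proof.
elim: l => [|x l IH] H; first by rewrite !big_nil.
by rewrite !big_cons H /=; [rewrite IH // => y Hy; apply: H; right | left].
Qed.

Lemma big_In0 F l : (forall x, In x l -> F x = 0) -> \sum_(x <- l) F x = 0.
Proof. by move=> H; rewrite (@eq_big_In F (fun _ => 0)) ?big1. Qed.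

Lemma big_const_list (c : N) l : \sum_(x <- l) c = c *+ length l.
Proof. by elim: l => [|x l IH]; rewrite ?big_nil ?big_cons ?IH ?mulrS. Qed.

Lemma big_filter_supp F (P : T -> Prop) l : (forall x, ~ P x -> F x = 0) ->
  \sum_(x <- l) F x = \sum_(x <- List.filter (fun x => `[< P x >]) l) F x.
Proof.
move=> H; elim: l => [|x l IH] //=.
rewrite big_cons IH; case: (asboolP (P x)) => Px; first by rewrite big_cons.
by rewrite H // add0r.
Qed.

Lemma big_NoDup_supp F l1 l2 : NoDup l1 -> NoDup l2 ->
  (forall x, F x <> 0 -> In x l1) -> (forall x, F x <> 0 -> In x l2) ->
  \sum_(x <- l1) F x = \sum_(x <- l2) F x.
Proof.
move=> N1 N2 H1 H2.
have supp l : (forall x, F x <> 0 -> In x l) -> forall x, ~ In x l -> F x = 0.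
  by move=> Hl x Hx; case: (pselect (F x = 0)) => // /Hl.
rewrite (big_filter_supp _ (supp _ H2)) [RHS](big_filter_supp _ (supp _ H1)).
apply: big_Permutation; apply: NoDup_Permutation; try exact: NoDup_filter.
by move=> x; rewrite !filter_In; split=> -[? /asboolP ?]; split=> //; apply/asboolP.
Qed.

End ListSums.

Lemma finite_set_NoDup (T : Type) (P : T -> Prop) :
  finite_set P -> exists O : list T, NoDup O /\ (forall y, In y O <-> P y).
Proof.
case=> s Hs; exists (nodup (@classic_eq_dec T) (List.filter (fun y => `[< P y >]) s)).
split; first exact: NoDup_nodup.
move=> y; rewrite nodup_In filter_In; split=> [[_ /asboolP]|Py] //.
by split; [apply: Hs | apply/asboolP].
Qed.

Section FinSupp.
Variables (X : Type) (N : zmodType).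

Lemma kXt_ext (u v : kXt X N) : (forall x, u x = v x) -> u = v.
Proof.
case: u => u Hu; case: v => v Hv /= H.
have E : u = v by apply: funext.
subst v; congr KXt; exact: Prop_irrelevance.
Qed.

Lemma fsupp_delta (x : X) (m : N) : fsupp (fun y => if pselect (y = x) then m else 0).
Proof. by exists (x :: nil) => y Hy; case: pselect => // E; case: Hy; left. Qed.

Definition kdelta (x : X) (m : N) : kXt X N := KXt (fsupp_delta x m).

Definition supp_list (u : kXt X N) : list X :=
  nodup (@classic_eq_dec X) (proj1_sig (cid (kXvalP u))).

Lemma supp_list_NoDup (u : kXt X N) : NoDup (supp_list u).
Proof. exact: NoDup_nodup. Qed.

Lemma supp_listP (u : kXt X N) x : u x <> 0 -> In x (supp_list u).
Proof.
rewrite /supp_list nodup_In; case: (cid _) => s Hs /= Hx.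
by case: (pselect (In x s)) => // /Hs.
Qed.

End FinSupp.

Definition mkLinear (R : pzRingType) (M N : lmodType R) (f : M -> N) (H : linear f) :
  {linear M -> N} := HB.pack f (GRing.isLinear.Build _ _ _ _ f H).

Section Action.
Variables (G : groupType) (X : Type) (act : X -> G -> X).
Hypothesis actP : is_right_action act.

Lemma actK g : cancel (act^~ g) (act^~ g^-1%g).
Proof. by case: actP => a1 a2 x /=; rewrite a2 mulgV a1. Qed.

Lemma actKV g : cancel (act^~ g^-1%g) (act^~ g).
Proof. by case: actP => a1 a2 x /=; rewrite a2 mulVg a1. Qed.

Lemma act_inj g : injective (act^~ g).
Proof. exact: can_inj (actK g). Qed.

Lemma orbit_G_subset x : G_subset act (G_orbit act x).
Proof. by case: actP => _ a2 y g [h ->]; exists (h * g)%g; rewrite a2. Qed.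

Lemma orbit_self x : G_orbit act x x.
Proof. by exists 1%g; case: actP. Qed.

Lemma finite_G_subset_iff_finite_orbit :
  (exists Y : X -> Prop, [/\ G_subset act Y, (exists y, Y y) & finite_set Y])
  <-> exists x : X, finite_set (G_orbit act x).
Proof.
split.
  by case=> Y [HY [y Hy] [s Hs]]; exists y, s => z [g ->]; apply/Hs/HY.
case=> x Hx; exists (G_orbit act x); split=> //; [exact: orbit_G_subset | exists x; exact: orbit_self].
Qed.

Section FiniteGSubset.
Variable O : list X.
Hypothesis O_NoDup : NoDup O.
Hypothesis O_closed : forall x g, In x O -> In (act x g) O.

Lemma G_subset_Permutation g : Permutation O (map (act^~ g) O).
Proof.
apply: NoDup_Permutation => //.
  by apply: FinFun.Injective_map_NoDup => // x y; apply: act_inj.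
move=> x; rewrite in_map_iff; split=> [Hx|[y [<- /O_closed //]]].
by exists (act x g^-1%g); rewrite actKV; split=> //; apply: O_closed.
Qed.

Lemma big_G_subset_act (N : zmodType) (F : X -> N) g :
  \sum_(x <- O) F (act x g) = \sum_(x <- O) F x.
Proof. by rewrite -(big_map (act^~ g) xpredT) -(big_Permutation _ (G_subset_Permutation g)). Qed.

End FiniteGSubset.
End Action.

Section HomogeneousDecomposition.
Variables (G : groupType) (k : fieldType) (A : algType k).
Variable Ag : G -> A -> Prop.
Hypothesis grad : is_G_grading Ag.

Lemma Ag0 g : Ag g 0. Proof. by case: grad. Qed.

Lemma AgD g a b : Ag g a -> Ag g b -> Ag g (a + b).
Proof. by case: grad => _ H _ _ _; apply: H. Qed.

Lemma AgB g a b : Ag g a -> Ag g b -> Ag g (a - b).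
Proof. by case: grad => _ _ HZ _ _ Ha Hb; rewrite -scaleN1r; apply/AgD/HZ. Qed.

Definition homdec (a : A) (t : list G) (f : G -> A) :=
  [/\ NoDup t, (forall g, In g t -> Ag g (f g)) & a = \sum_(g <- t) f g].

Lemma homdec_exists a : exists p : list G * (G -> A), homdec a p.1 p.2.
Proof. by case: grad => _ _ _ H _; have [s [f [? [? ?]]]] := H a; exists (s, f). Qed.

Definition hdec a := proj1_sig (cid (homdec_exists a)).

Lemma hdecP a : homdec a (hdec a).1 (hdec a).2.
Proof. exact: (proj2_sig (cid (homdec_exists a))). Qed.

Definition hsum (W : zmodType) (Phi : G -> A -> W) (a : A) : W :=
  \sum_(g <- (hdec a).1) Phi g ((hdec a).2 g).

Definition zero_ext (t : list G) (f : G -> A) g := if pselect (In g t) then f g else 0.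

Lemma homdec_zero_ext a t f U : homdec a t f -> NoDup U ->
  (forall g, In g t -> In g U) -> homdec a U (zero_ext t f).
Proof.
move=> [Nt Ht ->] NU tU; split=> //.
  by move=> g _; rewrite /zero_ext; case: pselect => Hg; [exact: Ht | exact: Ag0].
rewrite (@eq_big_In _ _ _ (zero_ext t f)) => [|g Hg]; last by rewrite /zero_ext; case: pselect.
by apply: big_NoDup_supp => // g; rewrite /zero_ext; case: pselect => // Hg _; exact: tU.
Qed.

Section AdditiveFamily.
Variables (W : zmodType) (Phi : G -> A -> W).
Hypothesis PhiD : forall g x y, Phi g (x + y) = Phi g x + Phi g y.

Lemma Phi0 g : Phi g 0 = 0.
Proof. by apply: (addrI (Phi g 0)); rewrite -PhiD !addr0. Qed.

Lemma big_zero_ext (t U : list G) (f : G -> A) : NoDup t -> NoDup U ->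
  (forall g, In g t -> In g U) ->
  \sum_(g <- t) Phi g (f g) = \sum_(g <- U) Phi g (zero_ext t f g).
Proof.
move=> Nt NU tU.
rewrite (@eq_big_In _ _ _ (fun g => Phi g (zero_ext t f g))); last first.
  by move=> g Hg; rewrite /zero_ext; case: pselect.
by apply: big_NoDup_supp => // g; rewrite /zero_ext;
  case: (pselect (In g t)) => Hg; rewrite ?Phi0 // => _; exact: tU.
Qed.

(* By uniqueness of homogeneous components, any decomposition computes [hsum]. *)
Lemma hsumE a t f : homdec a t f -> hsum Phi a = \sum_(g <- t) Phi g (f g).
Proof.
move=> Hd; have Hs := hdecP a; rewrite /hsum.
set s := (hdec a).1 in Hs *; set fs := (hdec a).2 in Hs *.
set U := list_union s t; have NU : NoDup U := list_union_NoDup s t.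
have sU := @list_unionl _ s t; have tU := @list_unionr _ s t.
have [_ H1 E1] := homdec_zero_ext Hs NU sU.
have [_ H2 E2] := homdec_zero_ext Hd NU tU.
case: Hs => Ns _ _; case: Hd => Nt _ _.
rewrite (big_zero_ext _ Ns NU sU) (big_zero_ext _ Nt NU tU).
apply: eq_big_In => g Hg; congr (Phi g _); apply/eqP; rewrite -subr_eq0; apply/eqP.
case: grad => _ _ _ _ Huniq.
apply: (Huniq U (fun g => zero_ext s fs g - zero_ext t f g)) => //.
  by move=> h Hh; apply: AgB; [apply: H1 | apply: H2].
by rewrite sumrB -E1 -E2 subrr.
Qed.

Lemma hsum0 : hsum Phi 0 = 0.
Proof.
rewrite (@hsumE 0 nil (fun _ => 0)) ?big_nil //.
by split=> [|g []|]; rewrite ?big_nil //; exact: NoDup_nil.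
Qed.

Lemma hsumD a b : hsum Phi (a + b) = hsum Phi a + hsum Phi b.
Proof.
have Ha := hdecP a; have Hb := hdecP b.
have NU := list_union_NoDup (hdec a).1 (hdec b).1.
have Ha' := homdec_zero_ext Ha NU (@list_unionl _ _ _).
have Hb' := homdec_zero_ext Hb NU (@list_unionr _ _ _).
rewrite (hsumE Ha') (hsumE Hb') -big_split /=.
under eq_bigr => g _ do rewrite -PhiD.
apply: hsumE; case: Ha' => _ Ha1 Ea; case: Hb' => _ Hb1 Eb.
split=> //; first by move=> g Hg; apply: AgD; [apply: Ha1 | apply: Hb1].
by rewrite big_split /= -Ea -Eb.
Qed.

End AdditiveFamily.
End HomogeneousDecomposition.

Section Averaging.
Variables (G : groupType) (k : fieldType) (A : algType k) (X : Type) (act : X -> G -> X).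
Hypothesis actP : is_right_action act.
Variable Ag : G -> A -> Prop.
Hypothesis grad : is_G_grading Ag.
Variable O : list X.
Hypothesis O_NoDup : NoDup O.
Hypothesis O_closed : forall x g, In x O -> In (act x g) O.
Variable c : A.
Hypothesis c_central : forall a, c * a = a * c.
Hypothesis c_size : c *+ length O = 1.

Section Average.
Variables (M N : lmodType A^c) (phi : gr_hom actP Ag M N).

Definition average (m : M) : N :=
  (c : A^c) *: \sum_(x <- O) proj1_sig phi (kdelta x m) x.

Lemma averageD m m' : average (m + m') = average m + average m'.
Proof.
case: (proj2_sig phi) => phiD _ _.
rewrite /average -scalerDr -big_split /=; congr (_ *: _); apply: eq_bigr => x _.
rewrite -phiD; congr (proj1_sig phi _ x); apply: kXt_ext => y /=.
by case: pselect => ?; rewrite ?addr0.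
Qed.

Lemma average0 : average 0 = 0.
Proof. by apply: (addrI (average 0)); rewrite -averageD !addr0. Qed.

Lemma average_sum (I : Type) (s : list I) (F : I -> M) :
  average (\sum_(i <- s) F i) = \sum_(i <- s) average (F i).
Proof. by elim: s => [|i s IH]; rewrite ?big_nil ?average0 // !big_cons averageD IH. Qed.

Lemma average_homZ g (a : A) m : Ag g a -> average ((a : A^c) *: m) = (a : A^c) *: average m.
Proof.
case: (proj2_sig phi) => _ phiZ _ Ha.
have E x : kdelta x ((a : A^c) *: m) = kXhact actP (kdelta (act x g^-1%g) m) g a.
  apply: kXt_ext => y /=; case: pselect => [Hyx|Hyx]; first by subst y; case: pselect.
  by case: pselect => [/(act_inj actP) //|?]; rewrite scaler0.
rewrite /average; under eq_bigr => x _ do rewrite E (phiZ _ _ Ha) /=.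
rewrite -scaler_sumr (big_G_subset_act actP O_NoDup O_closed
  (fun y => proj1_sig phi (kdelta y m) y)).
by rewrite !scalerA; congr (_ *: _); exact: esym (c_central a).
Qed.

Lemma average_linear : linear average.
Proof.
move=> a m m'; rewrite averageD; congr (_ + _).
case: grad => _ _ _ Hdec _; have [s [f [_ [Hf ->]]]] := Hdec a.
rewrite (scaler_suml (R := A^c)) average_sum (scaler_suml (R := A^c)).
by apply: eq_big_In => g Hg; apply: average_homZ (Hf g Hg).
Qed.

End Average.

Lemma kX_separable_of_average : kX_separable actP Ag.
Proof.
exists (fun M N phi => mkLinear (average_linear phi)); split.
- move=> M N f phi Hphi m /=; rewrite /average.
  rewrite (eq_bigr (fun _ => f m)) => [|x _]; last by rewrite Hphi /=; case: pselect.
  by rewrite big_const_list -scalerMnr scalerMnl [_ *+ _]c_size scale1r.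
- move=> M M' N N' f g phi psi Hpsi m /=; rewrite /average.
  under eq_bigr => x _ do rewrite Hpsi /=.
  have E x : kXmap f (kdelta x m) = kdelta x (f m).
    by apply: kXt_ext => y /=; case: pselect => ?; rewrite ?linear0.
  under eq_bigr => x _ do rewrite E.
  by rewrite -linear_sum linearZ.
Qed.

End Averaging.

Lemma kX_separable_of_finite_orbit (G : groupType) (k : fieldType) (A : algType k)
    (X : Type) (act : X -> G -> X) (actP : is_right_action act) (Ag : G -> A -> Prop) :
  [pchar k] =i pred0 -> is_G_grading Ag ->
  (exists x : X, finite_set (G_orbit act x)) -> kX_separable actP Ag.
Proof.
move=> char0 grad [x0 /finite_set_NoDup[O [NO HO]]].
have O_closed x g : In x O -> In (act x g) O.
  by move=> /HO Hx; apply/HO; apply: orbit_G_subset.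
have n0 : ((length O)%:R : k) != 0.
  by rewrite (proj1 (pcharf0P k) char0); have /HO := orbit_self actP x0; case: (O).
apply: (@kX_separable_of_average _ _ _ _ _ _ _ grad O NO O_closed ((length O)%:R^-1 *: 1)).
- by move=> a; rewrite -scalerAl mul1r -scalerAr mulr1.
- by rewrite scalerMnl -mulr_natr mulVf // scale1r.
Qed.

Section FreeModule.
Variables (k : fieldType) (A : algType k) (X : Type).

(* the right regular module A_A *)
Definition regA := (A^c)^o.

(* the free right A-module A^(X), with (u a)_x = u_x a *)
Definition freeX := kXt X A.
HB.instance Definition _ := gen_eqMixin freeX.
HB.instance Definition _ := gen_choiceMixin freeX.

Lemma fsupp0 : fsupp (fun _ : X => (0 : A)). Proof. by exists nil. Qed.

Lemma fsuppN (u : freeX) : fsupp (fun x => - (u x : A)).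
Proof. by case: u => u [s Hs]; exists s => x Hx /=; rewrite Hs ?oppr0. Qed.

Lemma fsuppD (u v : freeX) : fsupp (fun x => (u x : A) + v x).
Proof.
case: u => u [s Hs]; case: v => v [t Ht]; exists (s ++ t) => x Hx /=.
by rewrite Hs ?Ht ?addr0 // => H; apply: Hx; apply: in_or_app; tauto.
Qed.

Lemma fsuppMr (a : A) (u : freeX) : fsupp (fun x => (u x : A) * a).
Proof. by case: u => u [s Hs]; exists s => x Hx /=; rewrite Hs ?mul0r. Qed.

Definition free0 : freeX := KXt fsupp0.
Definition freeN (u : freeX) : freeX := KXt (fsuppN u).
Definition freeD (u v : freeX) : freeX := KXt (fsuppD u v).
Definition freeZ (a : A^c) (u : freeX) : freeX := KXt (fsuppMr a u).

Lemma freeDA : associative freeD.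
Proof. by move=> u v w; apply: kXt_ext => x /=; rewrite addrA. Qed.
Lemma freeDC : commutative freeD.
Proof. by move=> u v; apply: kXt_ext => x /=; rewrite addrC. Qed.
Lemma free0D : left_id free0 freeD.
Proof. by move=> u; apply: kXt_ext => x /=; rewrite add0r. Qed.
Lemma freeND : left_inverse free0 freeN freeD.
Proof. by move=> u; apply: kXt_ext => x /=; rewrite addNr. Qed.

HB.instance Definition _ := GRing.isZmodule.Build freeX freeDA freeDC free0D freeND.

Lemma freeZA a b (v : freeX) : freeZ a (freeZ b v) = freeZ (a * b) v.
Proof. by apply: kXt_ext => x /=; rewrite -mulrA. Qed.
Lemma freeZ1 : left_id 1 freeZ.
Proof. by move=> u; apply: kXt_ext => x /=; rewrite mulr1. Qed.
Lemma freeZDr : right_distributive freeZ +%R.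
Proof. by move=> a u v; apply: kXt_ext => x /=; rewrite mulrDl. Qed.
Lemma freeZDl (v : freeX) : {morph freeZ^~ v : a b / a + b}.
Proof. by move=> a b; apply: kXt_ext => x /=; rewrite mulrDr. Qed.

HB.instance Definition _ :=
  GRing.Zmodule_isLmodule.Build A^c freeX freeZA freeZ1 freeZDr freeZDl.

Lemma freeDE (u v : freeX) x : (u + v) x = u x + v x. Proof. by []. Qed.
Lemma freeZE (a : A^c) (u : freeX) x : (a *: u) x = (u x : A) * a. Proof. by []. Qed.
Lemma free_sumE (I : Type) (s : list I) (F : I -> freeX) x :
  (\sum_(i <- s) F i) x = \sum_(i <- s) F i x.
Proof. by elim: s => [|i s IH]; rewrite ?big_nil ?big_cons // freeDE IH. Qed.

Definition fdelta z (a : A) : freeX := kdelta z a.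

Lemma fdeltaE z a y : fdelta z a y = if pselect (y = z) then a else 0.
Proof. by []. Qed.
Lemma fdeltaD z (a b : A) : fdelta z (a + b) = fdelta z a + fdelta z b.
Proof. by apply: kXt_ext => y; rewrite freeDE !fdeltaE; case: pselect => ?; rewrite ?addr0. Qed.
Lemma fdeltaZ z (a : A) (c : A^c) : c *: fdelta z a = fdelta z ((a : A) * c).
Proof. by apply: kXt_ext => y; rewrite freeZE !fdeltaE; case: pselect => ?; rewrite ?mul0r. Qed.

Definition eps (u : freeX) : regA := \sum_(x <- supp_list u) (u x : A).

Lemma epsE (u : freeX) L : NoDup L -> (forall x, u x <> 0 -> In x L) ->
  eps u = \sum_(x <- L) (u x : A).
Proof. by move=> NL HL; apply: big_NoDup_supp => //; [exact: supp_list_NoDup | exact: supp_listP]. Qed.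

Lemma eps_linear : linear eps.
Proof.
move=> a u v.
set L := list_union (supp_list u) (supp_list v).
have NL : NoDup L := list_union_NoDup _ _.
have HuL x : u x <> 0 -> In x L by move=> Hx; apply/list_unionl/supp_listP.
have HvL x : v x <> 0 -> In x L by move=> Hx; apply/list_unionr/supp_listP.
rewrite (epsE NL HuL) (epsE NL HvL) (epsE NL).
  rewrite [RHS](_ : _ = \sum_(x <- L) ((u x : A) * a + v x)) //.
  by rewrite big_split /= -mulr_suml.
move=> x; rewrite freeDE freeZE => H.
case: (pselect (u x = 0)) => Hu; last exact: HuL.
by apply: HvL => Hv; apply: H; rewrite Hu Hv mul0r addr0.
Qed.

Definition epsL : {linear freeX -> regA} := mkLinear eps_linear.

Lemma eps_fdelta z (a : A) : eps (fdelta z a) = a.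
Proof.
rewrite (@epsE _ (z :: nil)); first by rewrite big_cons big_nil fdeltaE addr0; case: pselect.
  by constructor => //; exact: NoDup_nil.
by move=> x; rewrite fdeltaE; case: pselect => // Hx _; left.
Qed.

End FreeModule.

Section GradedHom.
Variables (G : groupType) (k : fieldType) (A : algType k) (X : Type) (act : X -> G -> X).
Hypothesis actP : is_right_action act.
Variable Ag : G -> A -> Prop.

Lemma kXmap_gr_hom (M N : lmodType A^c) (f : {linear M -> N}) : is_gr_hom actP Ag (kXmap f).
Proof.
split=> [u v y /=|g a Ha u y /=|x u Hu y Hy /=]; first by rewrite linearD.
  by rewrite linearZ.
by rewrite Hu // linear0.
Qed.

Lemma gr_hom_comp (M N P : lmodType A^c) (phi : kXt X M -> kXt X N)
    (psi : kXt X N -> kXt X P) :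
  is_gr_hom actP Ag phi -> is_gr_hom actP Ag psi -> is_gr_hom actP Ag (fun u => psi (phi u)).
Proof.
case=> H1 H2 H3 [K1 K2 K3]; split.
- by move=> u v y; rewrite -K1; congr (psi _ y); apply: kXt_ext => z; exact: H1.
- by move=> g a Ha u y; rewrite -(K2 _ _ Ha); congr (psi _ y); apply: kXt_ext => z; exact: H2.
- by move=> x u Hu y Hy; apply: (K3 x (phi u)) Hy => z Hz; exact: H3 x u Hu z Hz.
Qed.

End GradedHom.

Section Splitting.
Variables (G : groupType) (k : fieldType) (A : algType k) (X : Type) (act : X -> G -> X).
Hypothesis actP : is_right_action act.
Variable Ag : G -> A -> Prop.
Hypothesis Agr : strongly_graded Ag.

Let grad : is_G_grading Ag. Proof. by case: Agr. Qed.

Let AgM g h a b : Ag g a -> Ag h b -> Ag (g * h)%g (a * b).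
Proof. by case: Agr => _ H _ _; apply: H. Qed.

Local Notation freeX := (freeX A X).
Local Notation regA := (regA A).

Definition split_at (y : X) (g : G) (b : A) : freeX := fdelta (act y g^-1%g) b.

Lemma split_atD y g a b : split_at y g (a + b) = split_at y g a + split_at y g b.
Proof. exact: fdeltaD. Qed.

Definition sigma_fun (u : kXt X regA) (y : X) : freeX := hsum grad (split_at y) (u y).

Lemma fsupp_sigma (u : kXt X regA) : fsupp (sigma_fun u).
Proof.
exists (supp_list u) => y Hy; rewrite /sigma_fun.
suff -> : u y = 0 by exact: hsum0 (@split_atD y).
case: (pselect (u y = 0)) => // Hn; exfalso; apply: Hy; exact: supp_listP.
Qed.

Definition sigma (u : kXt X regA) : kXt X freeX := KXt (fsupp_sigma u).

Lemma sigma_gr_hom : is_gr_hom actP Ag sigma.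
Proof.
split.
- by move=> u v y /=; rewrite /sigma_fun /= (hsumD grad (@split_atD y)).
- move=> h c Hc u y /=; rewrite /sigma_fun /=.
  set b := u (act y h^-1%g); have [Ns Hs Eb] := hdecP grad b.
  have Hd : homdec Ag ((c : A^c) *: (b : regA)) (map (fun g => g * h)%g (hdec grad b).1)
      (fun g => (hdec grad b).2 (g * h^-1)%g * c).
    split.
    + by apply: FinFun.Injective_map_NoDup => // x1 x2; apply: mulIg.
    + by move=> g /in_map_iff[g' [<- Hg']]; rewrite mulgK; exact: AgM (Hs _ Hg') Hc.
    + by rewrite big_map; under eq_bigr => g _ do rewrite mulgK; rewrite -mulr_suml -Eb.
  rewrite (hsumE grad (@split_atD y) Hd) big_map /hsum scaler_sumr.
  apply: eq_bigr => g _; rewrite mulgK /split_at fdeltaZ; congr fdelta.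
  by case: actP => _ a2; rewrite a2 invgM.
- by move=> x u Hu y Hy /=; rewrite /sigma_fun Hu //; exact: hsum0 (@split_atD y).
Qed.

Definition sigmaG : gr_hom actP Ag regA freeX := exist _ sigma sigma_gr_hom.

Lemma eps_sigma (u : kXt X regA) y : eps (sigma u y) = u y.
Proof.
rewrite -[eps _]/(epsL A X (hsum grad (split_at y) (u y))) /hsum raddf_sum.
have [_ _ {3}->] := hdecP grad (u y).
by apply: eq_bigr => g _; exact: eps_fdelta.
Qed.

Section ShiftLeftMul.
Variables (h : G) (c : A).

Lemma fsupp_shift_lmul (w : freeX) : fsupp (fun z => c * (w (act z h) : A)).
Proof.
exists (map (act^~ h^-1%g) (supp_list w)) => z Hz.
case: (pselect (w (act z h) = 0)) => [->|Hn]; first by rewrite mulr0.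
by exfalso; apply/Hz/in_map_iff; exists (act z h); rewrite actK //; split=> //; exact: supp_listP.
Qed.

Definition shift_lmul (w : freeX) : freeX := KXt (fsupp_shift_lmul w).

Lemma shift_lmul_linear : linear shift_lmul.
Proof. by move=> a u v; apply: kXt_ext => z /=; rewrite mulrDr mulrA. Qed.

Definition shift_lmulL : {linear freeX -> freeX} := mkLinear shift_lmul_linear.

End ShiftLeftMul.

(* Left multiplication by c on A_A is right multiplication in A^c. *)
Definition lmulL (c : A) : {linear regA -> regA} := (c : regA) \o* idfun.

Lemma sigma_lmul h c (u : kXt X regA) y : Ag h c ->
  sigma (kXmap (lmulL c) u) y = shift_lmul h c (sigma u y).
Proof.
move=> Hc; rewrite /= /sigma_fun /=.
set b := u y; have [Ns Hs Eb] := hdecP grad b.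
have Hd : homdec Ag (c * (b : A)) (map (fun g => h * g)%g (hdec grad b).1)
    (fun g => c * (hdec grad b).2 (h^-1 * g)%g).
  split.
  + by apply: FinFun.Injective_map_NoDup => // x1 x2; apply: mulgI.
  + by move=> g /in_map_iff[g' [<- Hg']]; rewrite mulKg; exact: AgM Hc (Hs _ Hg').
  + by rewrite big_map; under eq_bigr => g _ do rewrite mulKg; rewrite -mulr_sumr -Eb.
rewrite (hsumE grad (@split_atD y) Hd) big_map.
apply: kXt_ext => z /=; rewrite free_sumE /hsum free_sumE mulr_sumr.
apply: eq_bigr => g _; rewrite mulKg /split_at !fdeltaE.
have E : (z = act y (h * g)^-1%g) <-> (act z h = act y g^-1%g).
  case: actP => _ a2; rewrite invgM -a2; split=> [->|<-]; first exact: actKV.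
  by rewrite actK.
by do 2 case: pselect => ?; rewrite ?mulr0 //; exfalso; tauto.
Qed.

Section Retraction.
Variable P : forall M N : lmodType A^c, gr_hom actP Ag M N -> {linear M -> N}.
Hypothesis P_kXmap : forall (M N : lmodType A^c) (f : {linear M -> N}) (phi : gr_hom actP Ag M N),
  (forall u, proj1_sig phi u = kXmap f u) -> forall m, P phi m = f m.
Hypothesis P_natural : forall (M M' N N' : lmodType A^c) (f : {linear M' -> M})
    (g : {linear N -> N'}) (phi : gr_hom actP Ag M N) (psi : gr_hom actP Ag M' N'),
  (forall u, proj1_sig psi u = kXmap g (proj1_sig phi (kXmap f u))) ->
  forall m, P psi m = g (P phi (f m)).

Lemma kXmap_id (M : lmodType A^c) (u : kXt X M) : kXmap idfun u = u.
Proof. exact: kXt_ext. Qed.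

Lemma eps_P_sigma m : eps (P sigmaG m) = m.
Proof.
pose idG : gr_hom actP Ag regA regA := exist _ _ (kXmap_gr_hom actP Ag idfun).
rewrite -[eps _]/(epsL A X _) -(P_natural (f := idfun) (phi := sigmaG) (psi := idG)).
  exact: (P_kXmap (f := idfun)).
by move=> u; apply: kXt_ext => y /=; rewrite -[eps _]/(epsL A X _) /= kXmap_id eps_sigma.
Qed.

Lemma P_sigma_lmul h c m : Ag h c ->
  shift_lmul h c (P sigmaG m) = P sigmaG (c * (m : A)).
Proof.
move=> Hc.
pose psi : gr_hom actP Ag regA freeX :=
  exist _ _ (gr_hom_comp sigma_gr_hom (kXmap_gr_hom actP Ag (shift_lmulL h c))).
transitivity (P psi m).
  by rewrite (P_natural (f := idfun) (g := shift_lmulL h c) (phi := sigmaG) (psi := psi))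
    // => u /=; rewrite kXmap_id.
rewrite (P_natural (f := lmulL c) (g := idfun) (phi := sigmaG) (psi := psi)) //.
by move=> u; apply: kXt_ext => y; exact: esym (sigma_lmul u y Hc).
Qed.

Definition v_one : freeX := P sigmaG (1 : regA).

Lemma v_one_comm h c z : Ag h c -> c * (v_one (act z h) : A) = (v_one z : A) * c.
Proof.
move=> Hc; have := P_sigma_lmul 1 Hc; rewrite mulr1.
have -> : P sigmaG c = (c : A^c) *: v_one.
  by rewrite -linearZ; congr (P _ _); rewrite -[RHS]/((1 : A) * c) mul1r.
by move/(congr1 (fun w : freeX => w z)).
Qed.

Lemma v_one_supp_stable z g : v_one z <> 0 -> v_one (act z g) <> 0.
Proof.
move=> Hz Hzg; apply: Hz.
case: Agr => _ _ AgS Ag1.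
have : Ag (g * g^-1)%g 1 by rewrite mulgV.
case/AgS => l [Hl El].
rewrite -[v_one z]mulr1 El mulr_sumr big_In0 // => p /Hl[Hp1 _].
by rewrite mulrA -(v_one_comm z Hp1) Hzg mulr0 mul0r.
Qed.

Lemma finite_orbit_of_retraction : (1 : A) != 0 -> exists x : X, finite_set (G_orbit act x).
Proof.
move=> A_nz.
have [z [_ Hz]] : exists z, In z (supp_list v_one) /\ v_one z <> 0.
  apply: contrapT => Hn; move/eqP: A_nz; apply.
  have := eps_P_sigma 1; rewrite /eps big_In0 => [E|z Hzs]; first exact: esym E.
  by case: (pselect (v_one z = 0)) => // Hvz; exfalso; apply: Hn; exists z.
by exists z, (supp_list v_one) => y [g ->]; apply/supp_listP/v_one_supp_stable.
Qed.

End Retraction.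
End Splitting.

Lemma kX_separable_iff_finite_orbit (G : groupType) (k : fieldType) (A : algType k)
    (X : Type) (act : X -> G -> X) (actP : is_right_action act) (Ag : G -> A -> Prop) :
  [pchar k] =i pred0 -> strongly_graded Ag -> (1 : A) != 0 ->
  kX_separable actP Ag <-> exists x : X, finite_set (G_orbit act x).
Proof.
move=> char0 Agr A_nz; split.
  by case=> P [P_kXmap P_natural]; exact: finite_orbit_of_retraction P_kXmap P_natural A_nz.
by apply: kX_separable_of_finite_orbit char0 _; case: Agr.
Qed.

Unset Implicit Arguments.

Theorem corollary3p8p4 (k : fieldType) (G : groupType) (X : Type)
  (act : X -> G -> X) (A : algType k) (Ag : G -> A -> Prop)
  (char0 : [pchar k] =i pred0)
  (actP : is_right_action act)
  (Agr : strongly_graded Ag)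
  (A_nz : (1 : A) != 0) :
  [/\ (kX_separable actP Ag <-> exists Y : X -> Prop,
          [/\ G_subset act Y, (exists y, Y y) & finite_set Y]),
      ((exists Y : X -> Prop, [/\ G_subset act Y, (exists y, Y y) & finite_set Y])
          <-> exists x : X, finite_set (G_orbit act x)) &
      (kX_separable actP Ag <-> exists x : X, finite_set (G_orbit act x))].
Proof.
have E12 := finite_G_subset_iff_finite_orbit actP.
have E13 := kX_separable_iff_finite_orbit actP char0 Agr A_nz.
by split=> //; rewrite E13 E12.
Qed.
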